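(* Let $l\in\{1,2,3\}$ and $\lambda_0>0$. Let the base stations be the points of a homogeneous Poisson point process in $\mathbb R^l$ with intensity $\lambda_0$, with a mobile station at the origin, all transmission powers and shadow fading factors equal to $1$. For an increasing path-loss function $h$, let $\left(\frac CI\right)_h=\frac{1/h(R_1)}{\sum_{i\ge2}1/h(R_i)}$, where $R_1\le R_2\le\cdots$ are the ordered distances of the base stations from the origin (received power at distance $R$ is $1/h(R)$). Let $h_i(r)=r^{\varepsilon_i}$, $i=1,2$, with $\varepsilon_1>\varepsilon_2>l$, and write $\left(\frac CI\right)_i=\left(\frac CI\right)_{h_i}$. Then $\left(\frac CI\right)_1\ge_{\mathrm{st}}\left(\frac CI\right)_2$.
   Context: The mobile is served by the BS with strongest received power (the nearest one) and all other BSs interfere. For random variables $X,Y$, $X\ge_{\mathrm{st}}Y$ means $\mathbb P(X>x)\ge\mathbb P(Y>x)$ for all real $x$. *)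

From mathcomp Require Import all_boot all_order all_algebra.
From mathcomp Require Import all_classical all_reals all_analysis.
Import Order.TTheory GRing.Theory Num.Theory.
Local Open Scope classical_set_scope.
Local Open Scope ring_scope.

Section defs.
Context {R : realType}.

Definition eucl_norm {l : nat} (x : 'rV[R]_l) : R :=
  Num.sqrt (\sum_(j < l) x ord0 j ^+ 2).

Definition in_box {l : nat} (a b x : 'rV[R]_l) : Prop :=
  forall j, a ord0 j < x ord0 j <= b ord0 j.

Definition box_vol {l : nat} (a b : 'rV[R]_l) : R :=
  \prod_(j < l) (b ord0 j - a ord0 j).

Definition count_in {T : Type} {l : nat} (X : nat -> T -> 'rV[R]_l)
    (a b : 'rV[R]_l) (w : T) : \bar R :=
  (\sum_(i <oo) (if pselect (in_box a b (X i w)) then 1 else 0)%:E)%E.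

(* X is a homogeneous Poisson point process of intensity lam on R^l:
   the X i are random vectors and for every finite family of pairwise
   disjoint half-open boxes the counts are independent Poisson variables
   with means lam * volume (joint pmf factorizes). *)
Definition homogeneous_PPP {d} {Omega : measurableType d}
    (P : probability Omega R) {l : nat} (lam : R)
    (X : nat -> Omega -> 'rV[R]_l) : Prop :=
  (forall i (j : 'I_l), measurable_fun setT (fun w => X i w ord0 j)) /\
  forall (n : nat) (a b : 'I_n -> 'rV[R]_l) (m : 'I_n -> nat),
    (forall k j, a k ord0 j < b k ord0 j) ->
    (forall k k', k != k' -> forall x,
        in_box (a k) (b k) x -> in_box (a k') (b k') x -> False) ->
    P (\bigcap_(k in [set: 'I_n])
          [set w | count_in X (a k) (b k) w = ((m k)%:R)%:E])
    = (\prod_(k < n)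
         (expR (- (lam * box_vol (a k) (b k)))
          * (lam * box_vol (a k) (b k)) ^+ m k / ((m k)`!)%:R))%:E.

Definition sorted_by_distance {T : Type} {l : nat}
    (X : nat -> T -> 'rV[R]_l) : Prop :=
  forall w i, eucl_norm (X i w) <= eucl_norm (X i.+1 w).

(* (C/I)_h : power 1/h(R_1) of the nearest BS over the sum of the others.
   (X 0 is the nearest BS, i.e. R_1 = |X 0|.) *)
Definition CI {T : Type} {l : nat} (h : R -> R)
    (X : nat -> T -> 'rV[R]_l) (w : T) : R :=
  (h (eucl_norm (X 0%N w)))^-1 /
  fine (\sum_(i <oo) ((h (eucl_norm (X i.+1 w)))^-1)%:E)%E.

Definition stoch_ge {d} {Omega : measurableType d}
    (P : probability Omega R) (Y Z : Omega -> R) : Prop :=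
  forall x : R, (P [set w | (x < Z w)%R] <= P [set w | (x < Y w)%R])%E.

End defs.

From mathcomp Require Import all_boot all_order all_algebra.
From mathcomp Require Import all_classical all_reals all_analysis.
From mathcomp Require Import measurable_realfun.
Import Order.TTheory GRing.Theory Num.Theory.
Local Open Scope ring_scope.

(** The dominance holds pointwise, for every configuration of base stations.
   Writing [r = R_1] and dividing numerator and denominator by [r^-eps],
   [(C/I)_eps = 1 / \sum_(i >= 2) (r / R_i)^eps].  Since [0 <= r / R_i <= 1],
   every term decreases as [eps] grows, so the sum decreases and [(C/I)_eps]
   increases.  Pointwise order of two measurable variables implies the
   stochastic order. *)

Section path_loss_ratio.
Context {R : realType}.

Definition CI_dist (h : R -> R) (r : R) (Rs : nat -> R) : R :=
  (h r)^-1 / fine (\sum_(i <oo) ((h (Rs i))^-1)%:E)%E.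

Lemma CIE {T : Type} {l : nat} (h : R -> R) (X : nat -> T -> 'rV[R]_l) w :
  CI h X w = CI_dist h (eucl_norm (X 0%N w)) (fun i => eucl_norm (X i.+1 w)).
Proof. by []. Qed.

Lemma powR_le1_exp_antitone (a e1 e2 : R) :
  0 <= a <= 1 -> 0 < e2 <= e1 -> a `^ e1 <= a `^ e2.
Proof.
move=> /andP[a0 a1] /andP[e20 e21].
have [->|an0] := eqVneq a 0.
  by rewrite !powR0 ?gt_eqF // (lt_le_trans e20 e21).
by apply: ger_powR => //; rewrite lt_neqAle eq_sym an0 a0.
Qed.

Lemma fineEFinMl (a : R) (x : \bar R) : 0 < a -> fine (a%:E * x)%E = a * fine x.
Proof.
move=> a0; case: x => [x||] //=.
- by rewrite muleC gt0_mulye ?lte_fin ?mulr0.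
- by rewrite muleC gt0_mulNye ?lte_fin ?mulr0.
Qed.

Lemma fine_inv_le (x y : \bar R) :
  (0 < x)%E -> (x <= y)%E -> (fine y)^-1 <= (fine x)^-1.
Proof.
move=> x0 xy; case: y xy => [y||] xy /=; last 2 first.
- by rewrite invr0 invr_ge0 fine_ge0 // ltW.
- by move: xy; rewrite leeNy_eq => /eqP xNy; rewrite xNy in x0.
have xfin : x \is a fin_num by rewrite ge0_fin_numE ?(le_lt_trans xy) ?ltry ?ltW.
have fx0 : 0 < fine x by rewrite -lte_fin fineK.
have fxy : fine x <= y by rewrite -lee_fin fineK.
by rewrite lef_pV2 ?posrE ?(lt_le_trans fx0 fxy).
Qed.

Lemma powR_invr (s e : R) : 0 <= s -> s^-1 `^ e = (s `^ e)^-1.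
Proof. by move=> s0; rewrite -powR_inv1 // -powRrM mulN1r powRN. Qed.

Lemma CI_dist_powR_ratio (e r : R) (Rs : nat -> R) :
  0 < r -> (forall i, 0 < Rs i) ->
  CI_dist (fun x => x `^ e) r Rs
  = (fine (\sum_(i <oo) ((r / Rs i) `^ e)%:E)%E)^-1.
Proof.
move=> r0 Rs0; have re0 : 0 < r `^ e by exact: powR_gt0.
have -> : (\sum_(i <oo) ((r / Rs i) `^ e)%:E)%E
          = ((r `^ e)%:E * \sum_(i <oo) ((Rs i `^ e)^-1)%:E)%E.
  rewrite -nneseriesZl => [|i _]; last by rewrite lee_fin invr_ge0 powR_ge0.
  apply: eq_eseriesr => i _.
  by rewrite powRM ?invr_ge0 ?powR_invr ?ltW.
by rewrite fineEFinMl // invfM.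
Qed.

Lemma CI_dist_powR_le (e1 e2 r : R) (Rs : nat -> R) :
  0 < e2 <= e1 -> 0 <= r -> (forall i, r <= Rs i) ->
  CI_dist (fun x => x `^ e2) r Rs <= CI_dist (fun x => x `^ e1) r Rs.
Proof.
move=> /andP[e20 e21] r0 rRs; have e10 := lt_le_trans e20 e21.
have [->|rn0] := eqVneq r 0.
  by rewrite /CI_dist !powR0 ?gt_eqF // invr0 !mul0r.
have {r0 rn0}r_gt0 : 0 < r by rewrite lt_neqAle eq_sym rn0.
have Rs0 i : 0 < Rs i by exact: lt_le_trans r_gt0 (rRs i).
have ratio01 i : 0 <= r / Rs i <= 1.
  by rewrite ler_pdivrMr // mul1r rRs andbT divr_ge0 ?ltW.
rewrite !CI_dist_powR_ratio //; apply: fine_inv_le.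
  (* the series dominates its first term, which is positive *)
  apply: (@lt_le_trans _ _ ((r / Rs 0%N) `^ e1)%:E).
    by rewrite lte_fin powR_gt0 ?divr_gt0.
  have := @nneseries_lim_ge R (fun i => ((r / Rs i) `^ e1)%:E) xpredT 0%N 1%N.
  by rewrite big_nat1; apply=> i _ _; rewrite lee_fin powR_ge0.
apply: lee_nneseries => [i _ _|i _]; first by rewrite lee_fin powR_ge0.
by rewrite lee_fin powR_le1_exp_antitone ?e20.
Qed.

End path_loss_ratio.

Section measurability.
Local Open Scope classical_set_scope.
Variables (R : realType) (d : measure_display) (Omega : measurableType d).

Lemma measurable_eucl_norm {l : nat} (Y : Omega -> 'rV[R]_l) :
  (forall j : 'I_l, measurable_fun setT (fun w => Y w ord0 j)) ->
  measurable_fun setT (fun w => eucl_norm (Y w)).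
Proof.
move=> mY; apply: measurableT_comp (continuous_measurable_fun (@sqrt_continuous R)) _.
by apply: measurable_sum => j; exact: measurable_funX.
Qed.

Lemma measurable_CI_powR {l : nat} (X : nat -> Omega -> 'rV[R]_l) (e : R) :
  (forall i (j : 'I_l), measurable_fun setT (fun w => X i w ord0 j)) ->
  measurable_fun setT (CI (fun r => r `^ e) X).
Proof.
move=> mX; have mdist i := measurable_eucl_norm (X i) (mX i).
(* inversions are rewritten as powers, whose measurability is in the library *)
have -> : CI (fun r => r `^ e) X = fun w =>
    eucl_norm (X 0%N w) `^ (- e) *
    fine (\sum_(i <oo) (eucl_norm (X i.+1 w) `^ (- e))%:E)%E `^ (-1).
  apply/funext => w; rewrite /CI powRN powR_inv1; last first.
    by apply/fine_ge0/nneseries_ge0 => i _ _; rewrite lee_fin powR_ge0.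
  by congr (_ * (fine _)^-1); apply: eq_eseriesr => i _; rewrite powRN.
apply: measurable_funM; first exact: measurableT_comp (measurable_powR _) (mdist 0%N).
apply: measurableT_comp (measurable_powR _) _.
apply: measurableT_comp (fine_measurable measurableT) _.
apply: (@ge0_emeasurable_sum _ _ _ setT _ xpredT).
  by move=> i w _ _; rewrite lee_fin powR_ge0.
move=> i _; apply/measurable_EFinP.
exact: measurableT_comp (measurable_powR _) (mdist i.+1).
Qed.

Lemma measurable_gt_fun (F : Omega -> R) (x : R) : measurable_fun setT F ->
  measurable [set w | x < F w].
Proof.
move=> mF; rewrite -[X in measurable X]setTI.
have -> : [set w | x < F w] = F @^-1` `]x, +oo[.
  by apply/seteqP; split=> w /=; rewrite in_itv /= andbT.
exact: mF.
Qed.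

End measurability.

Theorem corollary5 (R : realType) (d : measure_display)
    (Omega : measurableType d) (P : probability Omega R)
    (l : nat) (lam eps1 eps2 : R)
    (X : nat -> Omega -> 'rV[R]_l) :
  (1 <= l <= 3)%N -> 0 < lam ->
  homogeneous_PPP P lam X -> sorted_by_distance X ->
  l%:R < eps2 -> eps2 < eps1 ->
  stoch_ge P (CI (fun r => r `^ eps1) X) (CI (fun r => r `^ eps2) X).
Proof.
move=> _ _ [mX _] sorted e2l e21 x.
have e20 : 0 < eps2 by apply: le_lt_trans e2l; rewrite ler0n.
have nearest_first w i : eucl_norm (X 0%N w) <= eucl_norm (X i.+1 w).
  by elim: i => [|i IH]; [exact: sorted | exact: le_trans IH (sorted _ _)].
apply: le_measure; rewrite ?inE.
- exact/measurable_gt_fun/measurable_CI_powR.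
- exact/measurable_gt_fun/measurable_CI_powR.
move=> w /= ltxCI2; apply: lt_le_trans ltxCI2 _; rewrite !CIE.
apply: CI_dist_powR_le; [by rewrite e20 ltW | exact: sqrtr_ge0 | exact: nearest_first].
Qed.
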